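(* Let $(X,\tau)$ be a real Hausdorff extended locally convex space with finest locally convex topology $\tau_F$, and let $A\subseteq X$ be such that both $A$ and its complement $A^c=X\setminus A$ are convex. Then the following are equivalent: (i) $\mathrm{core}(A^c)=A^c$ and $A$ is closed in $(X,\tau)$; (ii) $A$ is closed in $(X,\tau_F)$.
   Context: An extended seminorm on a real vector space $X$ is a map $\rho:X\to[0,\infty]$ with $\rho(\alpha x)=|\alpha|\rho(x)$ and $\rho(x+y)\le\rho(x)+\rho(y)$. An extended locally convex space $(X,\tau)$ is a vector space with the topology induced by a family $\{\rho_i\}$ of extended seminorms (neighborhood base at $x_0$: $\{x:\max_{i\in J}\rho_i(x-x_0)<\varepsilon\}$, $J$ finite, $\varepsilon>0$). A locally convex topology is one induced in this way by finite-valued seminorms. The finest locally convex topology $\tau_F$ of $(X,\tau)$ is the locally convex topology on $X$ with $\tau_F\subseteq\tau$ such that every locally convex topology $\sigma\subseteq\tau$ on $X$ satisfies $\sigma\subseteq\tau_F$. For $B\subseteq X$, $a\in\mathrm{core}(B)$ means: for every $x\in X$ there is $\delta_x>0$ with $a+tx\in B$ for all $0\le t\le\delta_x$. *)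

From HB Require Import structures.
From mathcomp Require Import all_boot all_order all_algebra.
From mathcomp Require Import boolp classical_sets reals constructive_ereal.
Set Implicit Arguments. Unset Strict Implicit. Unset Printing Implicit Defensive.
Import Order.TTheory GRing.Theory Num.Theory.
Local Open Scope classical_set_scope.
Local Open Scope ring_scope.

Section Defs.
Variables (R : realType) (X : lmodType R).

Definition ext_seminorm (rho : X -> \bar R) : Prop :=
  (forall x, (0 <= rho x)%E) /\
  (forall (a : R) (x : X), rho (a *: x) = (`|a|%:E * rho x)%E) /\
  (forall x y : X, (rho (x + y)%R <= rho x + rho y)%E).

Definition maxsn (I : Type) (rho : I -> X -> \bar R) (J : seq I) (x : X) : \bar R :=
  \big[Order.max/0%E]_(i <- J) rho i x.

Definition eopen (I : Type) (rho : I -> X -> \bar R) : set (set X) :=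
  [set U | forall x0, U x0 -> exists (J : seq I) (eps : R), 0 < eps /\
      [set x | (maxsn rho J (x - x0)%R < eps%:E)%E] `<=` U].

Definition closed_in (T : set (set X)) (A : set X) : Prop := T (~` A).

Definition hausdorff_top (T : set (set X)) : Prop :=
  forall x y : X, x <> y -> exists U V, T U /\ T V /\ U x /\ V y /\ U `&` V = set0.

Definition lc_topology (T : set (set X)) : Prop :=
  exists (J : Type) (p : J -> X -> \bar R),
    (forall j, ext_seminorm (p j)) /\ (forall j x, p j x \is a fin_num) /\
    T = eopen p.

Definition finest_lc_top (tau tauF : set (set X)) : Prop :=
  lc_topology tauF /\ tauF `<=` tau /\
  (forall sigma, lc_topology sigma -> sigma `<=` tau -> sigma `<=` tauF).

Definition convex_set (A : set X) : Prop :=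
  forall x y (t : R), A x -> A y -> 0 <= t <= 1 -> A (t *: x + (1 - t) *: y).

Definition core (B : set X) : set X :=
  [set a | forall x, exists2 d : R, 0 < d & forall t : R, 0 <= t <= d -> B (a + t *: x)].

End Defs.

From HB Require Import structures.
From mathcomp Require Import all_boot all_order all_algebra.
From mathcomp Require Import boolp classical_sets reals constructive_ereal.
From mathcomp Require Import ring lra.
Import Order.TTheory GRing.Theory Num.Theory.
Local Open Scope classical_set_scope.
Local Open Scope ring_scope.

(* If A^c is open for tau_F, it is tau-open, and each of its points is a core
   point because tau_F is generated by finite-valued seminorms, for which every
   basic ball absorbs every direction.
   Conversely, fix a in A^c. As a is a core point of the convex set A^c, the
   symmetric convex set U = {z | a + z, a - z in A^c} is absorbing, so its
   Minkowski functional p is a finite seminorm. Since A^c is a tau-neighbourhood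
   of a, U contains a tau-ball and the topology of p is coarser than tau, hence
   than tau_F. Finally A^c is p-open: each x0 in A^c is a core point, so A^c
   contains a point beyond x0 on the ray from a, and convex combinations of that
   point with a + (p-small vectors) fill a p-ball around x0. *)

Set Implicit Arguments.
Unset Strict Implicit.

Section MaxSeminorm.
Variables (R : realType) (X : lmodType R) (I : Type) (rho : I -> X -> \bar R).

Lemma maxsn_lt J x (e : \bar R) :
  (maxsn rho J x < e)%E <-> (0 < e)%E /\ (forall i, List.In i J -> (rho i x < e)%E).
Proof.
rewrite /maxsn; elim: J => [|j J IH].
  by rewrite big_nil; split=> [|[]//]; split=> // i [].
rewrite big_cons gt_max; split.
- move=> /andP[rhoj /IH[e0 rhoJ]]; split=> // i /= [<-|]; [done | exact: rhoJ].
- move=> [e0 rhoJ]; apply/andP; split; first by apply: rhoJ; left.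
  by apply/IH; split=> // i Ji; apply: rhoJ; right.
Qed.

Lemma maxsn_ge0 J x : (0 <= maxsn rho J x)%E.
Proof.
by rewrite /maxsn; elim: J => [|j J IH]; rewrite ?big_nil ?big_cons // le_max IH orbT.
Qed.

Lemma maxsn_fin_num J x :
  (forall i, rho i x \is a fin_num) -> maxsn rho J x \is a fin_num.
Proof.
move=> rho_fin; apply: (big_ind (fun y => y \is a fin_num)) => // y z.
by rewrite /Order.max; case: ifP.
Qed.

End MaxSeminorm.

Section ExtendedSeminormFamily.
Variables (R : realType) (X : lmodType R) (I : Type) (rho : I -> X -> \bar R).
Hypothesis rho_sn : forall i, ext_seminorm (rho i).

Lemma maxsnZ J (a : R) x : maxsn rho J (a *: x) = (`|a|%:E * maxsn rho J x)%E.
Proof.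
rewrite /maxsn (big_endo (fun y => `|a|%:E * y)%E) ?mule0 //.
- by apply: eq_bigr => i _; case: (rho_sn i) => _ [-> _].
- by move=> y z; rewrite maxe_pMr // lee_fin.
Qed.

Lemma maxsnN J x : maxsn rho J (- x) = maxsn rho J x.
Proof. by rewrite -scaleN1r maxsnZ normrN normr1 mul1e. Qed.

Lemma fin_eopen_sub_core (U : set X) : (forall i x, rho i x \is a fin_num) ->
  eopen rho U -> U `<=` core U.
Proof.
move=> rho_fin openU x0 Ux0 x; have [J [e [e0 ballU]]] := openU x0 Ux0.
set m := fine (maxsn rho J x).
have mE : maxsn rho J x = m%:E by rewrite fineK // maxsn_fin_num.
have m0 : 0 <= m by rewrite -lee_fin -mE maxsn_ge0.
have m1 : 0 < m + 1 by rewrite ltr_wpDl.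
have d0 : 0 < e / (m + 1) by rewrite divr_gt0.
have dm1 : e / (m + 1) * (m + 1) = e by field; rewrite lt0r_neq0.
exists (e / (m + 1)) => // t /andP[t0 td].
apply: ballU; rewrite /= addrC addKr maxsnZ mE -EFinM lte_fin ger0_norm //.
move: d0 dm1 (ler_wpM2r m0 td); set d := e / (m + 1); lra.
Qed.

Lemma bounded_seminorm_eopen_sub (p : X -> \bar R) (J : seq I) (e : R) :
  ext_seminorm p -> 0 < e ->
  (forall z, (maxsn rho J z < e%:E)%E -> (p z <= 1%:E)%E) ->
  eopen (fun _ : unit => p) `<=` eopen rho.
Proof.
move=> [_ [pZ _]] e0 p_le1 V openV x0 Vx0.
have [K [d [d0 ballV]]] := openV x0 Vx0.
have d20 : 0 < d / 2 by rewrite divr_gt0.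
exists J, (e * (d / 2)); split=> [|x]; first by rewrite mulr_gt0.
rewrite /= => small; apply: ballV; apply/maxsn_lt.
split=> [|_ _]; first by rewrite lte_fin.
have inv_d2 : `|(d / 2)^-1| = (d / 2)^-1 by rewrite ger0_norm // invr_ge0 ltW.
have : (p ((d / 2)^-1 *: (x - x0)) <= 1%:E)%E.
  by apply: p_le1; rewrite maxsnZ inv_d2 lte_pdivrMl // -EFinM mulrC.
rewrite pZ inv_d2 lee_pdivrMl // mule1 => /le_lt_trans; apply.
by rewrite lte_fin; lra.
Qed.

End ExtendedSeminormFamily.

Section Minkowski.
Variables (R : realType) (X : lmodType R) (U : set X).
Hypotheses (Ucvx : convex_set U) (UN : forall z, U z -> U (- z))
  (Uabs : forall x, exists2 l : R, 0 < l & U (l^-1 *: x)).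

Definition gauge_scalars (x : X) : set R := [set l | 0 < l /\ U (l^-1 *: x)].

Definition minkowski (x : X) : R := inf (gauge_scalars x).

Lemma gauge_scalars_neq0 x : gauge_scalars x !=set0.
Proof. by have [l l0 Ul] := Uabs x; exists l. Qed.

Lemma minkowski_ge0 x : 0 <= minkowski x.
Proof. by apply: lb_le_inf; [exact: gauge_scalars_neq0 | move=> l [/ltW]]. Qed.

Lemma minkowski_le x l : gauge_scalars x l -> minkowski x <= l.
Proof. by move=> xl; apply: ge_inf => //; exists 0 => k [/ltW]. Qed.

Lemma gauge_scalarsZ x c l :
  0 < c -> gauge_scalars x l -> gauge_scalars (c *: x) (c * l).
Proof.
move=> c0 [l0 Ul]; split; first by rewrite mulr_gt0.
by rewrite scalerA invfM mulrAC mulVf ?mul1r // lt0r_neq0.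
Qed.

Lemma gauge_scalars_ge x l l' : gauge_scalars x l -> l <= l' -> gauge_scalars x l'.
Proof.
move=> [l0 Ul] ll'; have l'0 : 0 < l' by apply: lt_le_trans ll'.
have U0 : U 0 by have [k _] := Uabs 0; rewrite scaler0.
split=> //; have := Ucvx (t := l / l') Ul U0; rewrite scaler0 addr0 scalerA.
rewrite mulrAC divff ?mul1r ?lt0r_neq0 //; apply.
by rewrite ler_pdivrMr // mul1r ll' andbT divr_ge0 // ltW.
Qed.

Lemma minkowski_lt x r : minkowski x < r -> gauge_scalars x r.
Proof.
by move=> /(inf_lt (gauge_scalars_neq0 x))[l xl /ltW]; apply: gauge_scalars_ge.
Qed.

Lemma minkowski_le1 z : U z -> minkowski z <= 1.
Proof. by move=> Uz; apply: minkowski_le; split; rewrite ?invr1 ?scale1r. Qed.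

Lemma minkowskiN x : minkowski (- x) = minkowski x.
Proof.
suff Nsub y : gauge_scalars (- y) `<=` gauge_scalars y.
  rewrite /minkowski; congr inf; apply/seteqP.
  by split; [exact: Nsub | rewrite -{1}[x]opprK; exact: Nsub].
by move=> l [l0 Uly]; split=> //; rewrite -[y]opprK scalerN; apply: UN.
Qed.

Lemma minkowski_pscale c x : 0 < c -> minkowski (c *: x) = c * minkowski x.
Proof.
move=> c0; apply/eqP; rewrite eq_le; apply/andP; split.
  rewrite -ler_pdivrMl //; apply: lb_le_inf; first exact: gauge_scalars_neq0.
  by move=> l xl; rewrite ler_pdivrMl //; apply/minkowski_le/gauge_scalarsZ.
apply: lb_le_inf; first exact: gauge_scalars_neq0.
move=> l cxl; rewrite -ler_pdivlMl // mulrC; apply: minkowski_le.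
have := gauge_scalarsZ (c := c^-1) _ cxl.
rewrite scalerA mulVf ?scale1r ?lt0r_neq0 //.
by rewrite mulrC; apply; rewrite invr_gt0.
Qed.

Lemma minkowskiZ a x : minkowski (a *: x) = `|a| * minkowski x.
Proof.
have [a0|a0|->] := ltgtP a 0.
- by rewrite ltr0_norm // -minkowski_pscale ?oppr_gt0 // scaleNr minkowskiN.
- by rewrite gtr0_norm // minkowski_pscale.
- have := minkowski_pscale 0 (ltr0Sn _ 1); rewrite scaler0 scale0r normr0 mul0r; lra.
Qed.

Lemma minkowskiD x y : minkowski (x + y) <= minkowski x + minkowski y.
Proof.
apply/ler_addgt0Pr => e e0.
set lx := minkowski x + e / 2; set ly := minkowski y + e / 2.
have [lx0 Ux] : gauge_scalars x lx by apply: minkowski_lt; rewrite /lx; lra.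
have [ly0 Uy] : gauge_scalars y ly by apply: minkowski_lt; rewrite /ly; lra.
have -> : minkowski x + minkowski y + e = lx + ly by rewrite /lx /ly; field.
apply: minkowski_le; split; first lra.
have := Ucvx (t := lx / (lx + ly)) Ux Uy; rewrite !scalerA.
have -> : lx / (lx + ly) * lx^-1 = (lx + ly)^-1 by field; lra.
have -> : (1 - lx / (lx + ly)) * ly^-1 = (lx + ly)^-1 by field; lra.
rewrite -scalerDr; apply.
by rewrite ler_pdivrMr ?mul1r ?divr_ge0 /=; lra.
Qed.

Lemma minkowski_ext_seminorm : ext_seminorm (fun x => (minkowski x)%:E).
Proof.
split=> [x|]; first by rewrite lee_fin minkowski_ge0.
by split=> [a x|x y]; rewrite -?EFinM -?EFinD ?lee_fin ?minkowskiZ ?minkowskiD.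
Qed.

End Minkowski.

Section CorePoints.
Variables (R : realType) (X : lmodType R) (B : set X).
Hypothesis Bcvx : convex_set B.

Lemma core_subset : core B `<=` B.
Proof.
move=> a /(_ 0)[d d0 /(_ 0)]; rewrite scaler0 addr0; apply.
by rewrite lexx ltW.
Qed.

Definition sym_part (a : X) : set X := [set z | B (a + z) /\ B (a - z)].

Lemma convex_combD (a y z : X) (t : R) :
  t *: (a + y) + (1 - t) *: (a + z) = a + (t *: y + (1 - t) *: z).
Proof. by rewrite !scalerDr addrACA -scalerDl [t + _]addrC subrK scale1r. Qed.

Lemma sym_part_convex a : convex_set (sym_part a).
Proof.
move=> y z t [By1 By2] [Bz1 Bz2] t01; split.
  by rewrite -convex_combD; apply: Bcvx.
rewrite opprD -!scalerN -convex_combD; exact: Bcvx.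
Qed.

Lemma sym_partN a z : sym_part a z -> sym_part a (- z).
Proof. by move=> [Bz1 Bz2]; rewrite /sym_part /= opprK. Qed.

Lemma sym_part_absorbing a : core B a ->
  forall x, exists2 l : R, 0 < l & sym_part a (l^-1 *: x).
Proof.
move=> aB x; have [d1 d10 B1] := aB x; have [d2 d20 B2] := aB (- x).
have m0 : 0 < Order.min d1 d2 by rewrite lt_min d10 d20.
exists (Order.min d1 d2)^-1; first by rewrite invr_gt0.
rewrite invrK; split; first by apply: B1; rewrite ltW //= ge_min lexx.
by rewrite -scalerN; apply: B2; rewrite ltW //= ge_min lexx orbT.
Qed.

Lemma algebraically_open_gauge_open a : B `<=` core B -> B a ->
  eopen (fun _ : unit => fun x => (minkowski (sym_part a) x)%:E) B.
Proof.
move=> Bcore Ba x0 Bx0.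
have [s s0 Bs] := Bcore x0 Bx0 (x0 - a).
have By : B (x0 + s *: (x0 - a)) by apply: Bs; rewrite lexx ltW.
pose t := (1 + s)^-1.
have t0 : 0 < t by rewrite invr_gt0; lra.
have t1 : t < 1 by rewrite invf_lt1; lra.
have ts : t * s = 1 - t by rewrite /t; field; lra.
exists [:: tt], (1 - t); split=> [|x]; first lra.
move=> /maxsn_lt[_ /(_ tt (or_introl erefl))]; rewrite lte_fin => small.
have [_ [Bw _]] := minkowski_lt (@sym_part_convex a)
  (sym_part_absorbing (Bcore a Ba)) small.
have t01 : 0 <= t <= 1 by rewrite !ltW.
(* x = t (x0 + s (x0 - a)) + (1 - t) (a + (x - x0) / (1 - t)) *)
have := Bcvx (t := t) By Bw t01.
rewrite scalerDr (scalerDr (1 - t)) !scalerA ts mulfV ?scale1r; last lra.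
rewrite scalerBr [t *: x0 + _]addrA -scalerDl [t + _]addrC subrK scale1r.
by rewrite addrA subrK addrC subrK.
Qed.

End CorePoints.

Theorem theorem3p14 (R : realType) (X : lmodType R) (I : Type)
  (rho : I -> X -> \bar R) (hrho : forall i, ext_seminorm (rho i))
  (hHaus : hausdorff_top (eopen rho))
  (tauF : set (set X)) (htauF : finest_lc_top (eopen rho) tauF)
  (A : set X) (hA : convex_set A) (hAc : convex_set (~` A)) :
  (core (~` A) = ~` A /\ closed_in (eopen rho) A) <-> closed_in tauF A.
Proof.
case: htauF => [[K [q [q_sn [q_fin ->]]]] [tauF_sub tauF_max]].
split=> [[core_Ac Acl]|Fcl]; last first.
  split; last exact: tauF_sub.
  apply/seteqP; split; first exact: core_subset.
  exact: (fin_eopen_sub_core q_sn q_fin Fcl).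
move=> a Aca; have core_a : core (~` A) a by rewrite core_Ac.
pose p x := (minkowski (sym_part (~` A) a) x)%:E.
have p_sn : ext_seminorm p := minkowski_ext_seminorm
  (@sym_part_convex _ _ _ hAc a) (@sym_partN _ _ _ a) (sym_part_absorbing core_a).
have p_lc : lc_topology (eopen (fun _ : unit => p)) by exists unit, (fun _ => p).
have p_sub : eopen (fun _ : unit => p) `<=` eopen rho.
  have [J [e [e0 ballAc]]] := Acl a Aca.
  apply: (bounded_seminorm_eopen_sub hrho (J := J) p_sn e0) => z ze.
  rewrite lee_fin; apply: minkowski_le1; split; apply: ballAc => /=.
    by rewrite addrC addKr.
  by rewrite addrC addKr maxsnN.
have p_Ac : eopen (fun _ : unit => p) (~` A).
  by apply: algebraically_open_gauge_open => //; rewrite core_Ac.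
exact: tauF_max p_lc p_sub _ p_Ac a Aca.
Qed.
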